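(* For every $0<\varepsilon<1$ there exists an integer $\Theta=\Theta(\varepsilon)>0$ depending only on $\varepsilon$ (and not on $q$-independent data such as $m,n$) such that for all $m,n$, all $A\in\mathbb F_q^{m\times n}$ and all nonempty $U\subseteq[n]$ the following holds. Choose $\boldsymbol\theta\in\{1,\dots,\Theta\}$ uniformly at random and then $(\mathbf i_1,\dots,\mathbf i_{\boldsymbol\theta})\in U^{\boldsymbol\theta}$ uniformly at random, and let $\hat A=A[\mathbf i_1,\dots,\mathbf i_{\boldsymbol\theta}]$. Then $$\mathbb P\big[\mu_{\hat A,U}\text{ is }\varepsilon\text{-symmetric}\big]>1-\varepsilon.$$
   Context: $q\ge2$ is a fixed prime power. For a matrix $A\in\mathbb F_q^{m\times n}$ the Boltzmann distribution $\mu_A$ is the uniform distribution on $\ker(A)\subseteq\mathbb F_q^n$; for $U\subseteq[n]$, $\mu_{A,U}$ denotes its marginal on the coordinates in $U$, and $\mu_{A,i}$, $\mu_{A,i,j}$ denote one- and two-coordinate marginals. For $i_1,\dots,i_\ell\in[n]$, $A[i_1,\dots,i_\ell]$ is the matrix obtained from $A$ by appending $\ell$ rows, the $j$-th of which has entry $1$ in column $i_j$ and zeros elsewhere. A probability measure $\mu$ on $\Omega^U$ ($\Omega$, $U$ finite) is $\varepsilon$-symmetric if $\sum_{i,j\in U}d_{TV}(\mu_{i,j},\mu_i\otimes\mu_j)<\varepsilon|U|^2$, where $\mu_i,\mu_{i,j}$ are marginals and $d_{TV}$ is total variation distance. *)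

From HB Require Import structures.
From mathcomp Require Import all_boot all_order all_algebra.
Set Implicit Arguments. Unset Strict Implicit. Unset Printing Implicit Defensive.
Import Order.TTheory GRing.Theory Num.Theory.
Local Open Scope ring_scope.

(* Probability measures on a finite type are given by their mass functions
   T -> rat.  *)

Definition dTV (T : finType) (p q : T -> rat) : rat :=
  2^-1 * \sum_(x : T) `|p x - q x|.

Definition marg1 (I O : finType) (mu : {ffun I -> O} -> rat) (i : I) : O -> rat :=
  fun a => \sum_(x : {ffun I -> O} | x i == a) mu x.

Definition marg2 (I O : finType) (mu : {ffun I -> O} -> rat) (i j : I)
  : O * O -> rat :=
  fun ab => \sum_(x : {ffun I -> O} | (x i, x j) == ab) mu x.

Definition prod_meas (O : finType) (p r : O -> rat) : O * O -> rat :=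
  fun ab => p ab.1 * r ab.2.

Definition eps_symmetric (I O : finType) (mu : {ffun I -> O} -> rat) (eps : rat)
  : bool :=
  \sum_(i : I) \sum_(j : I)
     dTV (marg2 mu i j) (prod_meas (marg1 mu i) (marg1 mu j))
  < eps * (#|I| ^ 2)%:R.

Definition kerA (F : finFieldType) m n (A : 'M[F]_(m, n)) : {set 'cV[F]_n} :=
  [set x : 'cV[F]_n | A *m x == 0].

Definition boltz (F : finFieldType) m n (A : 'M[F]_(m, n)) : 'cV[F]_n -> rat :=
  fun x => if x \in kerA A then (#|kerA A|%:R)^-1 else 0.

Definition boltzU (F : finFieldType) m n (A : 'M[F]_(m, n)) (U : {set 'I_n})
  : {ffun {i : 'I_n | i \in U} -> F} -> rat :=
  fun y => \sum_(x : 'cV[F]_n | [forall i, y i == x (val i) ord0]) boltz A x.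

(* A[i_1,...,i_l] : append l rows, the j-th being the unit row e_{i_j} *)
Definition pin_rows (F : finFieldType) m n (A : 'M[F]_(m, n)) l
  (idx : 'I_l -> 'I_n) : 'M[F]_(m + l, n) :=
  col_mx A (\matrix_(j < l, k < n) (k == idx j)%:R).

Arguments boltzU F m n A U : clear implicits.
Arguments boltzU {F m n} A U.
Arguments pin_rows {F m n} A {l} idx.

(** Under [mu_A] (uniform on the subspace [ker A]) two coordinates [i], [j]
   are exactly independent unless [j] is free on [ker A] but becomes frozen
   once [x_i = 0] is imposed, and their total variation defect is at most 1.
   So if [mu_{A,U}] is not [eps]-symmetric, pinning a uniformly random
   coordinate of [U] freezes on average at least [eps |U|] of the free
   coordinates in [U].  Their number lies in [[0, |U|]] and never grows under
   pinning, hence the probabilities that [mu_{A[i_1..i_theta],U}] is not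
   [eps]-symmetric sum over [theta] to at most [1/eps], and averaging over
   [theta <= Theta] with [Theta > 1/eps^2] gives failure probability [< eps]. *)

From HB Require Import structures.
From mathcomp Require Import all_boot all_order all_algebra ring lra.
Import Order.TTheory GRing.Theory Num.Theory.
Set Implicit Arguments. Unset Strict Implicit. Unset Printing Implicit Defensive.
Local Open Scope ring_scope.

Definition fiber (V : finType) (T : eqType) (K : {set V}) (phi : V -> T) (c : T) :=
  [set x in K | phi x == c].

Lemma sum_card_fiber (V T : finType) (K : {set V}) (phi : V -> T) :
  (\sum_(c : T) #|fiber K phi c|)%N = #|K|.
Proof.
rewrite -sum1_card; under eq_bigr => c _ do rewrite -sum1_card.
rewrite (exchange_big_dep (mem K)) /=; last by move=> c x _; rewrite inE => /andP[].
apply: eq_bigr => x xK; rewrite (big_pred1 (phi x)) // => c.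
by rewrite /= inE xK eq_sym.
Qed.

Lemma card_fiber_uniform (V T : finType) (K : {set V}) (phi : V -> T) (c0 : T) :
  (forall c d, #|fiber K phi c| = #|fiber K phi d|) ->
  (#|fiber K phi c0| * #|T|)%N = #|K|.
Proof.
move=> eq_fib; rewrite -(sum_card_fiber K phi).
under eq_bigr => c _ do rewrite (eq_fib c c0).
by rewrite sum_nat_const mulnC.
Qed.

Lemma card_fiber_pair_const (V : finType) (T1 T2 : eqType) (K : {set V})
    (phi : V -> T1) (psi : V -> T2) (c0 : T2) a b :
  {in K, forall x, psi x = c0} ->
  (#|fiber K (fun x => (phi x, psi x)) (a, b)| * #|K|)%N =
  (#|fiber K phi a| * #|fiber K psi b|)%N.
Proof.
move=> psi_c0; case: (eqVneq b c0) => [-> | b_c0].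
  have -> : fiber K psi c0 = K.
    by apply/setP => x; rewrite inE andb_idr // => /psi_c0 ->.
  congr (_ * _)%N; apply: eq_card => x; rewrite !inE xpair_eqE.
  by apply: andb_id2l => /psi_c0 ->; rewrite eqxx andbT.
have psi_b x : x \in K -> (psi x == b) = false.
  by move/psi_c0 ->; rewrite eq_sym (negbTE b_c0).
have -> : fiber K psi b = set0.
  by apply/setP => x; rewrite !inE; case: (boolP (x \in K)) => // /psi_b ->.
suff -> : fiber K (fun x => (phi x, psi x)) (a, b) = set0.
  by rewrite !cards0 mul0n muln0.
apply/setP => x; rewrite !inE xpair_eqE.
by case: (boolP (x \in K)) => // /psi_b ->; rewrite andbF.
Qed.

Lemma dTV_le1 (T : finType) (p r : T -> rat) :
  (forall x, 0 <= p x) -> (forall x, 0 <= r x) ->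
  \sum_x p x = 1 -> \sum_x r x = 1 -> dTV p r <= 1.
Proof.
move=> p_ge0 r_ge0 sum_p sum_r; rewrite /dTV.
apply: (@le_trans _ _ (2^-1 * (\sum_x p x + \sum_x r x))); last first.
  by rewrite sum_p sum_r mulVf.
rewrite ler_pM2l ?invr_gt0 // -big_split /=; apply: ler_sum => x _.
by apply: le_trans (ler_normB _ _) _; rewrite !ger0_norm.
Qed.

Lemma sum_ffun_extend (I : finType) (R : nmodType) th (G : {ffun 'I_th.+1 -> I} -> R) :
  \sum_s G s =
  \sum_(t : {ffun 'I_th -> I}) \sum_(i : I)
     G [ffun k => if unlift ord_max k is Some k' then t k' else i].
Proof.
rewrite pair_bigA (reindex (fun p : {ffun 'I_th -> I} * I =>
  [ffun k => if unlift ord_max k is Some k' then p.1 k' else p.2])) //=.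
exists (fun s => ([ffun k => s (lift ord_max k)], s ord_max)).
  move=> [t i] _ /=; congr pair; last by rewrite ffunE unlift_none.
  by apply/ffunP => k; rewrite !ffunE liftK.
move=> s _; apply/ffunP => k; rewrite ffunE /=.
by case: unliftP => [j ->|->]; rewrite ?ffunE.
Qed.

Section Subspace.
Variables (F : finFieldType) (n : nat).
Implicit Types (K : {set 'cV[F]_n}) (x y u v w : 'cV[F]_n).

Definition subspace K := [/\ 0 \in K, {in K &, forall x y, x + y \in K}
  & forall c : F, {in K, forall x, c *: x \in K}].

Lemma subspace_card_gt0 K : subspace K -> (0 < #|K|)%N.
Proof. by case=> K0 _ _; rewrite card_gt0; apply/set0Pn; exists 0. Qed.

Lemma subspaceB K x y : subspace K -> x \in K -> y \in K -> x - y \in K.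
Proof. by case=> _ KD KZ xK yK; rewrite KD // -scaleN1r KZ. Qed.

Lemma card_fiber_translate (T : eqType) K (phi : 'cV[F]_n -> T) c d w :
  subspace K -> w \in K -> (forall x, (phi (x + w) == d) = (phi x == c)) ->
  #|fiber K phi c| = #|fiber K phi d|.
Proof.
move=> sK wK phi_w.
have -> : fiber K phi d = (fun x => x + w) @: fiber K phi c.
  apply/setP => y; rewrite inE; apply/andP/imsetP => [[yK yd] | [x]].
    exists (y - w); last by rewrite subrK.
    by rewrite inE subspaceB //= -phi_w subrK.
  rewrite inE => /andP[xK phi_x] ->; split; last by rewrite phi_w.
  by case: sK => _ KD _; rewrite KD.
by rewrite card_imset //; apply: addIr.
Qed.

Lemma addr_eq_shift (y c d : F) : (y + (d - c) == d) = (y == c).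
Proof.
apply/eqP/eqP => [y_d | ->]; last by rewrite addrC subrK.
by rewrite -[y](addrK (d - c)) y_d opprB addrC subrK.
Qed.

Lemma card_fiber_coord K (i : 'I_n) v c : subspace K -> v \in K -> v i ord0 != 0 ->
  (#|fiber K (fun x => x i ord0) c| * #|F|)%N = #|K|.
Proof.
move=> sK vK vi_neq0; apply: card_fiber_uniform => a b.
apply: (card_fiber_translate _ _ (w := ((b - a) / v i ord0) *: v)) => //.
  by case: sK => _ _ KZ; rewrite KZ.
by move=> x; rewrite !mxE divfK // addr_eq_shift.
Qed.

Lemma card_fiber_coord2 K (i j : 'I_n) v u c : subspace K ->
    v \in K -> v i ord0 != 0 -> u \in K -> u i ord0 = 0 -> u j ord0 != 0 ->
  (#|fiber K (fun x => (x i ord0, x j ord0)) c| * (#|F| * #|F|))%N = #|K|.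
Proof.
move=> sK vK vi_neq0 uK ui_eq0 uj_neq0; rewrite -card_prod.
apply: card_fiber_uniform => -[a1 a2] [b1 b2].
pose al := (b1 - a1) / v i ord0.
pose be := (b2 - a2 - al * v j ord0) / u j ord0.
apply: (card_fiber_translate _ _ (w := al *: v + be *: u)) => //.
  by case: sK => _ KD KZ; rewrite KD ?KZ.
move=> x; rewrite !xpair_eqE !mxE ui_eq0 mulr0 addr0.
have -> : al * v i ord0 = b1 - a1 by rewrite divfK.
have -> : al * v j ord0 + be * u j ord0 = b2 - a2 by rewrite divfK // addrC subrK.
by rewrite !addr_eq_shift.
Qed.

Definition free_coord K (j : 'I_n) := [exists x in K, x j ord0 != 0].

Definition pin K (i : 'I_n) := [set x in K | x i ord0 == 0].

Definition freezes K (i j : 'I_n) := free_coord K j && ~~ free_coord (pin K i) j.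

Lemma free_coordPn K j : ~~ free_coord K j -> {in K, forall x, x j ord0 = 0}.
Proof.
move=> j_frozen x xK; apply/eqP/negPn; apply: contra j_frozen => xj_neq0.
by apply/existsP; exists x; rewrite xK.
Qed.

Lemma free_coord_pin K i j : free_coord (pin K i) j -> free_coord K j.
Proof.
case/existsP => x /andP[]; rewrite inE => /andP[xK _] xj_neq0.
by apply/existsP; exists x; rewrite xK.
Qed.

(* If [i] or [j] is frozen on [K] the pair fiber factorizes trivially;
   otherwise the coordinate maps and the pair map are all onto, so every
   fiber has the uniform size [#|K| / q] resp. [#|K| / q^2]. *)
Lemma card_fiber_coord_pair K (i j : 'I_n) a b : subspace K -> ~~ freezes K i j ->
  (#|fiber K (fun x => (x i ord0, x j ord0)) (a, b)| * #|K|)%N =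
  (#|fiber K (fun x => x i ord0) a| * #|fiber K (fun x => x j ord0) b|)%N.
Proof.
move=> sK; rewrite /freezes negb_and negbK => /orP[j_frozen | ij_free].
  exact: card_fiber_pair_const (free_coordPn j_frozen).
have [i_free | i_frozen] := boolP (free_coord K i); last first.
  rewrite [RHS]mulnC.
  rewrite -(card_fiber_pair_const (fun x => x j ord0) b a (free_coordPn i_frozen)).
  by congr (_ * _)%N; apply: eq_card => x; rewrite !inE !xpair_eqE [(_ == a) && _]andbC.
case/existsP: i_free => v /andP[vK vi_neq0].
case/existsP: ij_free => u /andP[]; rewrite inE => /andP[uK /eqP ui_eq0] uj_neq0.
have q_gt0 : (0 < #|F|)%N by apply/card_gt0P; exists 0.
apply/eqP; rewrite -(@eqn_pmul2r (#|F| * #|F|)) ?muln_gt0 ?q_gt0 //.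
rewrite mulnAC (card_fiber_coord2 _ sK vK vi_neq0 uK ui_eq0 uj_neq0) mulnACA.
by rewrite (card_fiber_coord _ sK vK vi_neq0) (card_fiber_coord _ sK uK uj_neq0).
Qed.

Definition unif K x : rat := if x \in K then #|K|%:R^-1 else 0.

Lemma sum_unif K (P : pred 'cV[F]_n) :
  \sum_(x | P x) unif K x = #|[set x in K | P x]|%:R / #|K|%:R.
Proof.
rewrite /unif -big_mkcondr sumr_const -(mulr_natr #|K|%:R^-1) mulrC; congr (_%:R * _).
by apply: eq_card => x; rewrite !inE andbC.
Qed.

Lemma sum_fiber_frac (T : finType) K (phi : 'cV[F]_n -> T) : subspace K ->
  \sum_(c : T) #|fiber K phi c|%:R / #|K|%:R = 1 :> rat.
Proof.
move=> sK; rewrite -mulr_suml -natr_sum sum_card_fiber divff //.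
by rewrite pnatr_eq0 -lt0n subspace_card_gt0.
Qed.

Variable U : {set 'I_n}.
Local Notation I := {i : 'I_n | i \in U}.

Definition unif_marg K (y : {ffun I -> F}) : rat :=
  \sum_(x : 'cV[F]_n | [forall i, y i == x (val i) ord0]) unif K x.

Lemma sum_unif_marg K (P : pred {ffun I -> F}) :
  \sum_(s | P s) unif_marg K s =
  \sum_(x : 'cV[F]_n | P [ffun i : I => x (val i) ord0]) unif K x.
Proof.
rewrite /unif_marg (exchange_big_dep xpredT) // [RHS]big_mkcond.
apply: eq_bigr => x _; set xU := [ffun i : I => x (val i) ord0].
rewrite (eq_bigl (fun s => (s == xU) && P xU)); last first.
  move=> s; have -> : [forall i, s i == x (val i) ord0] = (s == xU).
    apply/forallP/eqP => [s_x | ->]; last by move=> i; rewrite ffunE.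
    by apply/ffunP => i; rewrite ffunE; apply/eqP.
  by rewrite andbC; case: eqP => [-> | _].
case: (P xU); last by rewrite big_pred0 // => s; rewrite andbF.
by rewrite (eq_bigl (pred1 xU)) ?big_pred1_eq // => s; rewrite andbT.
Qed.

Lemma marg1_unif K (i : I) a :
  marg1 (unif_marg K) i a = #|fiber K (fun x => x (val i) ord0) a|%:R / #|K|%:R.
Proof.
rewrite /marg1 sum_unif_marg sum_unif; congr (_%:R / _).
by apply: eq_card => x; rewrite !inE ffunE.
Qed.

Lemma marg2_unif K (i j : I) ab :
  marg2 (unif_marg K) i j ab =
  #|fiber K (fun x => (x (val i) ord0, x (val j) ord0)) ab|%:R / #|K|%:R.
Proof.
rewrite /marg2 sum_unif_marg sum_unif; congr (_%:R / _).
by apply: eq_card => x; rewrite !inE !ffunE.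
Qed.

Lemma dTV_unif_marg_le1 K (i j : I) : subspace K ->
  dTV (marg2 (unif_marg K) i j)
      (prod_meas (marg1 (unif_marg K) i) (marg1 (unif_marg K) j)) <= 1.
Proof.
move=> sK; have marg1_ge0 k a : 0 <= marg1 (unif_marg K) k a.
  by rewrite marg1_unif divr_ge0 ?ler0n.
have sum_marg1 k : \sum_a marg1 (unif_marg K) k a = 1.
  by under eq_bigr => a _ do rewrite marg1_unif; apply: sum_fiber_frac.
apply: dTV_le1 => [ab | ab | | ].
- by rewrite marg2_unif divr_ge0 ?ler0n.
- by rewrite mulr_ge0.
- by under eq_bigr => ab _ do rewrite marg2_unif; apply: sum_fiber_frac.
rewrite /prod_meas -(pair_bigA _ (fun a b =>
  marg1 (unif_marg K) i a * marg1 (unif_marg K) j b)) /=.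
under eq_bigr => a _ do rewrite -mulr_sumr sum_marg1 mulr1.
exact: sum_marg1.
Qed.

Lemma dTV_unif_marg_eq0 K (i j : I) : subspace K -> ~~ freezes K (val i) (val j) ->
  dTV (marg2 (unif_marg K) i j)
      (prod_meas (marg1 (unif_marg K) i) (marg1 (unif_marg K) j)) = 0.
Proof.
move=> sK not_freezes; rewrite /dTV big1 ?mulr0 // => -[a b].
have K_neq0 : #|K|%:R != 0 :> rat by rewrite pnatr_eq0 -lt0n subspace_card_gt0.
rewrite /prod_meas marg2_unif !marg1_unif mulrACA -natrM.
rewrite -(card_fiber_coord_pair a b sK not_freezes) natrM.
by rewrite [_ / _ - _](_ : _ = 0) ?normr0 //; field.
Qed.

Lemma card_subU : #|{: I}| = #|U|.
Proof. by rewrite card_sig; apply: eq_card. Qed.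

Definition nfree K := #|[set j : I | free_coord K (val j)]|.

Lemma nfree_le K : (nfree K <= #|U|)%N.
Proof. by rewrite -card_subU max_card. Qed.

Lemma nfree_pin_le K i : (nfree (pin K i) <= nfree K)%N.
Proof.
by apply: subset_leq_card; apply/subsetP => j; rewrite !inE; apply: free_coord_pin.
Qed.

Lemma nfree_pin K i : (\sum_(j : I) freezes K i (val j) + nfree (pin K i))%N = nfree K.
Proof.
rewrite /nfree -(cardsID [set j : I | free_coord (pin K i) (val j)]
                        [set j : I | free_coord K (val j)]) addnC.
congr (_ + _)%N.
  by apply: eq_card => j; rewrite !inE [RHS]andb_idl //; apply: free_coord_pin.
rewrite -sum1_card [RHS]big_mkcond /=; apply: eq_bigr => j _.
by rewrite !inE /freezes andbC; case: (_ && _).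
Qed.

(* The pairs [(i, j)] with [freezes K i j] are the only ones contributing to
   the symmetry defect, each by at most 1; for fixed [i] there are exactly
   [nfree K - nfree (pin K i)] of them. *)
Lemma nfree_pin_drop K eps : subspace K -> ~~ eps_symmetric (unif_marg K) eps ->
  eps * (#|U| ^ 2)%:R <= \sum_(i : I) ((nfree K)%:R - (nfree (pin K (val i)))%:R).
Proof.
move=> sK; rewrite /eps_symmetric -leNgt card_subU => /le_trans; apply.
apply: ler_sum => i _.
apply: (@le_trans _ _ (\sum_(j : I) (freezes K (val i) (val j))%:R)).
  apply: ler_sum => j _; have [ij_freezes | not_freezes] := boolP (freezes K _ _).
    exact: dTV_unif_marg_le1.
  by rewrite dTV_unif_marg_eq0.
by rewrite -(nfree_pin K (val i)) natrD addrK natr_sum.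
Qed.

End Subspace.

Lemma kerA_subspace (F : finFieldType) m n (M : 'M[F]_(m, n)) : subspace (kerA M).
Proof.
split=> [| x y | c x]; rewrite !inE ?mulmx0 //.
  by rewrite mulmxDr => /eqP-> /eqP->; rewrite addr0.
by rewrite -scalemxAr => /eqP->; rewrite scaler0.
Qed.

Section Pinning.
Variables (F : finFieldType) (m n : nat) (A : 'M[F]_(m, n)) (U : {set 'I_n}).
Local Notation I := {i : 'I_n | i \in U}.

Definition pinned_ker th (t : {ffun 'I_th -> I}) :=
  kerA (pin_rows A (fun j => val (t j))).

Lemma in_pinned_ker th (t : {ffun 'I_th -> I}) x :
  (x \in pinned_ker t) = (A *m x == 0) && [forall j, x (val (t j)) ord0 == 0].
Proof.
rewrite inE /pin_rows mul_col_mx col_mx_eq0; congr (_ && _).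
have pin_row j : (\matrix_(j < th, k < n) (k == val (t j))%:R *m x) j ord0 =
                 x (val (t j)) ord0.
  rewrite !mxE (bigD1 (val (t j))) //= mxE eqxx mul1r big1 ?addr0 // => k k_neq.
  by rewrite mxE (negbTE k_neq) mul0r.
apply/eqP/forallP => [x_pinned j | x_pinned].
  by rewrite -pin_row x_pinned mxE.
by apply/matrixP => j k; rewrite (ord1 k) pin_row mxE; apply/eqP.
Qed.

Lemma pinned_ker_extend th (t : {ffun 'I_th -> I}) (i : I) :
  pinned_ker [ffun k => if unlift ord_max k is Some k' then t k' else i] =
  pin (pinned_ker t) (val i).
Proof.
apply/setP => x; rewrite in_pinned_ker inE in_pinned_ker -andbA; congr (_ && _).
apply/forallP/andP => [x_pinned | [/forallP x_pinned xi_eq0] k].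
  split; last by move: (x_pinned ord_max); rewrite ffunE unlift_none.
  by apply/forallP => j; move: (x_pinned (lift ord_max j)); rewrite ffunE liftK.
by rewrite ffunE; case: unliftP => [j _ | _] //=; apply: x_pinned.
Qed.

Definition total_nfree th : rat :=
  \sum_(t : {ffun 'I_th -> I}) (nfree U (pinned_ker t))%:R.

Definition asym_seqs eps th := ~: [set t : {ffun 'I_th -> I} |
  eps_symmetric (boltzU (pin_rows A (fun j => val (t j))) U) eps].

Lemma total_nfree_drop eps th :
  eps * (#|U| ^ 2)%:R * #|asym_seqs eps th|%:R <=
  #|U|%:R * total_nfree th - total_nfree th.+1.
Proof.
have -> : #|U|%:R * total_nfree th - total_nfree th.+1 =
    \sum_(t : {ffun 'I_th -> I}) \sum_(i : I)
      ((nfree U (pinned_ker t))%:R - (nfree U (pin (pinned_ker t) (val i)))%:R).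
  rewrite /total_nfree sum_ffun_extend mulr_sumr -sumrB; apply: eq_bigr => t _.
  under eq_bigr => i _ do rewrite pinned_ker_extend.
  by rewrite sumrB sumr_const card_subU mulr_natl.
have -> : eps * (#|U| ^ 2)%:R * #|asym_seqs eps th|%:R =
    \sum_(t : {ffun 'I_th -> I})
      (if t \in asym_seqs eps th then eps * (#|U| ^ 2)%:R else 0).
  by rewrite -big_mkcond /= sumr_const mulr_natr.
apply: ler_sum => t _; case: ifP => [t_asym | _].
  by apply: nfree_pin_drop; [apply: kerA_subspace | move: t_asym; rewrite !inE].
by apply: sumr_ge0 => i _; rewrite subr_ge0 ler_nat nfree_pin_le.
Qed.

Lemma total_nfree_le th : total_nfree th <= #|U|%:R * #|U|%:R ^+ th.
Proof.
apply: (@le_trans _ _ (\sum_(t : {ffun 'I_th -> I}) #|U|%:R)).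
  by apply: ler_sum => t _; rewrite ler_nat nfree_le.
by rewrite sumr_const card_ffun card_ord card_subU -(mulr_natr #|U|%:R) natrX.
Qed.

Definition mean_nfree th := total_nfree th / #|U|%:R ^+ th.

Definition asym_frac eps th : rat := #|asym_seqs eps th|%:R / #|U|%:R ^+ th.

Lemma mean_nfree_ge0 th : 0 <= mean_nfree th.
Proof. by rewrite divr_ge0 ?exprn_ge0 ?sumr_ge0. Qed.

Hypothesis U_neq0 : U != set0.

Let U_gt0 : 0 < #|U|%:R :> rat.
Proof. by rewrite ltr0n card_gt0. Qed.

Lemma mean_nfree_le th : mean_nfree th <= #|U|%:R.
Proof. by rewrite ler_pdivrMr ?exprn_gt0 // total_nfree_le. Qed.

Lemma mean_nfree_drop eps th :
  eps * #|U|%:R * asym_frac eps th <= mean_nfree th - mean_nfree th.+1.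
Proof.
pose D : rat := #|U|%:R ^+ th * #|U|%:R.
have D_gt0 : 0 < D by rewrite mulr_gt0 ?exprn_gt0.
have Uth_neq0 := lt0r_neq0 (exprn_gt0 th U_gt0); have Un_neq0 := lt0r_neq0 U_gt0.
have -> : eps * #|U|%:R * asym_frac eps th =
    eps * (#|U| ^ 2)%:R * #|asym_seqs eps th|%:R / D.
  by rewrite /asym_frac /D natrX; field; rewrite Uth_neq0 Un_neq0.
have -> : mean_nfree th - mean_nfree th.+1 =
    (#|U|%:R * total_nfree th - total_nfree th.+1) / D.
  by rewrite /mean_nfree /D exprSr; field; rewrite Uth_neq0 Un_neq0.
by rewrite ler_pM2r ?invr_gt0 // total_nfree_drop.
Qed.

Lemma sum_asym_frac_le eps Theta : 0 < eps ->
  eps * \sum_(1 <= th < Theta.+1) asym_frac eps th <= 1.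
Proof.
move=> eps_gt0; rewrite -(ler_pM2r U_gt0) mul1r mulrAC mulr_sumr.
apply: le_trans (ler_sum _ (fun th _ => mean_nfree_drop eps th)) _.
rewrite (telescope_sumr_eq (fun k => - mean_nfree k)) => [|//|k _].
  rewrite opprK addrC lerBlDr (le_trans (mean_nfree_le 1)) //.
  by rewrite lerDl mean_nfree_ge0.
by rewrite opprK addrC.
Qed.

Lemma sym_frac eps th :
  #|[set t : {ffun 'I_th -> I} |
      eps_symmetric (boltzU (pin_rows A (fun j => val (t j))) U) eps]|%:R
    / (#|U| ^ th)%:R = 1 - asym_frac eps th.
Proof.
have Uth_neq0 : (#|U| ^ th)%:R != 0 :> rat by rewrite natrX expf_neq0 ?lt0r_neq0.
set S := [set t : {ffun 'I_th -> I} | _].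
have card_S : (#|S| + #|asym_seqs eps th|)%N = (#|U| ^ th)%N.
  by rewrite cardsC card_ffun card_ord card_subU.
rewrite /asym_frac -natrX; apply/eqP.
by rewrite eq_sym subr_eq -mulrDl -natrD card_S mulfV.
Qed.

End Pinning.

Theorem lemma2p3 (F : finFieldType) (eps : rat) :
  0 < eps -> eps < 1 ->
  exists Theta : nat, (0 < Theta)%N /\
    forall (m n : nat) (A : 'M[F]_(m, n)) (U : {set 'I_n}),
      U != set0 ->
      (Theta%:R)^-1 *
        \sum_(1 <= th < Theta.+1)
          (#|[set t : {ffun 'I_th -> {i : 'I_n | i \in U}} |
               eps_symmetric (boltzU (pin_rows A (fun j => val (t j))) U) eps]|%:R
           / (#|U| ^ th)%:R)
      > 1 - eps.
Proof.
move=> eps_gt0 _; pose Theta := (Num.Def.archi_bound (eps^-1 ^+ 2)).+1.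
have Theta_gt0 : 0 < Theta%:R :> rat by rewrite ltr0n.
have eps2_Theta : 1 < eps ^+ 2 * Theta%:R.
  rewrite -[X in X < _](mulfV (expf_neq0 2 (lt0r_neq0 eps_gt0))).
  rewrite ltr_pM2l ?exprn_gt0 // -exprVn (lt_trans (archi_boundP _)) ?ltr_nat //.
  by rewrite exprn_ge0 // invr_ge0 ltW.
exists Theta; split => // m n A U U_neq0.
under eq_bigr => th _ do rewrite (sym_frac A U_neq0).
rewrite sumrB sumr_const_nat subn1 /= mulrBr mulVf ?lt0r_neq0 // ltrD2l ltrN2.
have := sum_asym_frac_le A U_neq0 Theta eps_gt0.
set S := \sum_(1 <= th < Theta.+1) _ => eps_S.
by rewrite mulrC ltr_pdivrMr //; nra.
Qed.
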